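(* Let $\mathcal{D}=(\Omega,\mathcal{B})$ be a supersimple $2$-$(n,4,\lambda)$ design satisfying property $(\triangle)$, such that $(\Omega,\mathcal{C})$ is a regular two-graph where $\mathcal{C}$ is the set of collinear triples, and let $\infty\in\Omega$. Let $x,y,z\in\Omega$ be pairwise distinct. Then: (a) the order of $[x,y]\cdot[y,z]$ is $2$ if $x\in\overline{y,z}$, and $3$ if $x\notin\overline{y,z}$; (b) if $x\notin\overline{y,z}$ then $[z,x,y,z]=[x,y]$; (c) $\mathcal{L}(\mathcal{D})=\mathcal{L}_\infty(\mathcal{D})$ is a group of automorphisms of $\mathcal{D}$.
   Context: A $2$-$(n,4,\lambda)$ design $(\Omega,\mathcal{B})$: $n$ points, a multiset of $4$-subsets (lines), every $2$-subset in exactly $\lambda$ lines; supersimple: distinct lines meet in at most two points. For distinct $a,b$ with lines $\{a,b,a_i,b_i\}$ through them, $[a,b]:=(a,b)\prod_i(a_i,b_i)$; $[a,a]:=1$. Permutations act on the right, products composed left to right; $[a_0,\dots,a_k]:=[a_0,a_1]\cdots[a_{k-1},a_k]$. $\mathcal{L}(\mathcal{D})$ is the set of all move sequences; $\mathcal{L}_\infty(\mathcal{D})$ the set of move sequences starting at $\infty$. $\overline{y,z}$ is the set of points $w$ such that some line contains $y,z,w$. Property $(\triangle)$: if $B_1,B_2\in\mathcal{B}$ with $|B_1\cap B_2|=2$ then $B_1\triangle B_2\in\mathcal{B}$. Regular two-graph: $(\Omega,\mathcal{C})$ is a $2$-$(n,3,\mu)$ design with every $4$-subset containing $0,2$ or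 $4$ members of $\mathcal{C}$. *)

From mathcomp Require Import all_boot all_fingroup.
Set Implicit Arguments. Unset Strict Implicit. Unset Printing Implicit Defensive.
Local Open Scope group_scope.

Section Design.
Variable T : finType.
(* Lines of the design, as a set of 4-subsets (supersimplicity forbids
   repeated lines, so a set is as general as a multiset here). *)
Variable Bs : {set {set T}}.

Definition blocks_of_size4 := forall B, B \in Bs -> #|B| = 4.

Definition design_2 (n lam : nat) :=
  [/\ #|T| = n, blocks_of_size4 &
      forall a b : T, a != b -> #|[set B in Bs | (a \in B) && (b \in B)]| = lam].

Definition supersimple :=
  forall B1 B2, B1 \in Bs -> B2 \in Bs -> B1 != B2 -> #|B1 :&: B2| <= 2.

Definition prop_triangle :=
  forall B1 B2, B1 \in Bs -> B2 \in Bs -> #|B1 :&: B2| = 2 ->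
    (B1 :\: B2) :|: (B2 :\: B1) \in Bs.

Definition collinear_triples : {set {set T}} :=
  [set t : {set T} | (#|t| == 3) && [exists B in Bs, t \subset B]].

Definition regular_two_graph (C : {set {set T}}) :=
  (forall t, t \in C -> #|t| = 3) /\
  (exists mu : nat, forall a b : T, a != b ->
      #|[set t in C | (a \in t) && (b \in t)]| = mu) /\
  (forall S : {set T}, #|S| = 4 ->
      #|[set t in C | t \subset S]| \in [:: 0; 2; 4]).

Definition overline (y z : T) : {set T} :=
  [set w | [exists B in Bs, [&& y \in B, z \in B & w \in B]]].

Definition swap_pair (S : {set T}) : {perm T} :=
  match [pick u in S] with
  | Some u => match [pick v in S :\ u] with
              | Some v => tperm u v
              | None => 1
              end
  | None => 1
  end.

(* [a,b] = (a,b) * prod_i (a_i,b_i) over the lines {a,b,a_i,b_i};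
   [a,a] = 1.  MathComp permutations act on the right with
   (s * t) x = t (s x), matching the paper's convention. *)
Definition bracket (a b : T) : {perm T} :=
  if a == b then 1 else
  tperm a b * \prod_(B in Bs | (a \in B) && (b \in B)) swap_pair (B :\ a :\ b).

(* [a_0, a_1, ..., a_k] = [a_0,a_1] ... [a_{k-1},a_k] *)
Fixpoint move_seq (a : T) (s : seq T) : {perm T} :=
  match s with
  | [::] => 1
  | b :: s' => bracket a b * move_seq b s'
  end.

Definition L_D (g : {perm T}) : Prop := exists (a : T) (s : seq T), g = move_seq a s.
Definition L_inf (inf : T) (g : {perm T}) : Prop := exists s : seq T, g = move_seq inf s.

Definition automorphism (g : {perm T}) : Prop :=
  forall B : {set T}, (B \in Bs) = (g @: B \in Bs).

Definition is_group_of_automorphisms (P : {perm T} -> Prop) : Prop :=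
  [/\ P 1, (forall g h, P g -> P h -> P (g * h)), (forall g, P g -> P g^-1)
    & forall g, P g -> automorphism g].

End Design.

From Pilot Require Import Defs.
From mathcomp Require Import all_boot all_fingroup.
From mathcomp Require Import cyclic zify.
Local Open Scope group_scope.
Set Implicit Arguments. Unset Strict Implicit. Unset Printing Implicit Defensive.

(* Brackets are involutions, and [a,b] = [c,d] whenever {a,b,c,d} is a line:
   by (triangle), a line {a,b,w,e} yields the line {c,d,w,e}.  Every bracket
   [a,b] maps lines to lines: a line through a and b is permuted; for a line
   {a,c,d,e} missing b, none, one or all three of c, d, e lie on a line through
   a and b (two is excluded by the two-graph condition), and repeated use of
   (triangle) produces the image line in each case; a line missing a and b
   either meets a line {a,b,p,q}, and [a,b] = [p,q], or is fixed pointwise.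
   Hence automorphisms conjugate brackets: [a,b]^g = [a^g,b^g].  If x is on a
   line {y,z,x,w}, conjugating [y,z] by [x,y] gives [x,w] = [y,z], so
   [x,y][y,z] is an involution; otherwise [x,y] fixes z and [y,z] fixes x, which
   gives the braid relations [x,y][y,z][x,y] = [x,z] = [y,z][x,y][y,z], hence
   order 3 and [z,x,y,z] = [x,y].  Finally a bracket [c,d] can be appended to a
   move sequence ending at e: as itself if e is c or d, as [e,w] if {c,d,e,w} is
   a line, and as [e,c,d,e] otherwise. *)

Ltac split_ands :=
  repeat match goal with H : is_true (_ && _) |- _ => case/andP: H => ? ? end.

Ltac rewrite_neqs := repeat (rewrite ?eqxx /=; match goal with
  | H : is_true (negb (@eq_op ?S ?x ?y)) |- context[@eq_op _ ?x ?y] =>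
      rewrite (negbTE H)
  | H : is_true (negb (@eq_op ?S ?x ?y)) |- context[@eq_op _ ?y ?x] =>
      rewrite [@eq_op S y x]eq_sym (negbTE H)
  end).

Ltac case_eq_point w := repeat match goal with |- context[@eq_op ?S w ?x] =>
  let E := fresh "E" in
  destruct (@eq_op S w x) eqn:E; [move/eqP: E => E; subst w | ] end.

Ltac solve_set_eq := let w := fresh "w" in
  apply/setP => w; rewrite !inE; case_eq_point w; rewrite_neqs;
  rewrite ?orbT ?orbF ?andbT ?andbF //.

Ltac solve_uniq := rewrite /= ?inE ?negb_or; rewrite_neqs; done.

Ltac expand_uniq H := rewrite /= ?inE ?negb_or in H; split_ands.

Section FiniteSets.
Variable T : finType.

Lemma card_set3 (p q r : T) : uniq [:: p; q; r] -> #|[set p; q; r]| = 3.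
Proof.
move=> U; rewrite (@eq_card _ _ (mem [:: p; q; r])); first exact/card_uniqP.
by move=> w; rewrite !inE !orbA.
Qed.

Lemma card_set4 (p q r s : T) : uniq [:: p; q; r; s] -> #|[set p; q; r; s]| = 4.
Proof.
move=> U; rewrite (@eq_card _ _ (mem [:: p; q; r; s])); first exact/card_uniqP.
by move=> w; rewrite !inE !orbA.
Qed.

Lemma card4_complete3 (A : {set T}) a b w : #|A| = 4 ->
  a \in A -> b \in A -> w \in A -> uniq [:: a; b; w] ->
  exists d, uniq [:: a; b; w; d] /\ A = [set a; b; w; d].
Proof.
move=> HA Ha Hb Hw U; expand_uniq U.
have Hb' : b \in A :\ a by rewrite !inE Hb; rewrite_neqs.
have Hw' : w \in A :\ a :\ b by rewrite !inE Hw; rewrite_neqs.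
have: #|A :\ a :\ b :\ w| == 1%N.
  move: (cardsD1 a A) (cardsD1 b (A :\ a)) (cardsD1 w (A :\ a :\ b)).
  rewrite HA Ha Hb' Hw' => E1 E2 E3; rewrite E2 E3 in E1; by case: E1 => ->.
case/cards1P => d Hd.
have : d \in A :\ a :\ b :\ w by rewrite Hd set11.
rewrite !inE => /andP[Hdw /andP[Hdb /andP[Hda HdA]]].
exists d; split; first by rewrite /= !inE !negb_or; rewrite_neqs.
apply/setP => x; rewrite !inE.
case: (boolP (x \in A :\ a :\ b :\ w)) => [|Hx].
  by rewrite Hd inE => /eqP ->; rewrite HdA eqxx !orbT.
move: Hx; rewrite !inE.
case: (x =P a) => [->|_]; first by rewrite Ha.
case: (x =P b) => [->|_]; first by rewrite Hb orbT.
case: (x =P w) => [->|_]; first by rewrite Hw !orbT.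
move=> /= Hx; rewrite (negbTE Hx); apply/esym/eqP => Exd.
by rewrite Exd HdA in Hx.
Qed.

Lemma card4_complete2 (A : {set T}) a b : #|A| = 4 ->
  a \in A -> b \in A -> a != b ->
  exists c d, uniq [:: a; b; c; d] /\ A = [set a; b; c; d].
Proof.
move=> HA Ha Hb Hab.
have Hb' : b \in A :\ a by rewrite !inE Hb eq_sym Hab.
have: (0 < #|A :\ a :\ b|)%N.
  by move: (cardsD1 a A) (cardsD1 b (A :\ a)); rewrite HA Ha Hb'; lia.
case/card_gt0P => c; rewrite !inE => /andP[Hcb /andP[Hca HcA]].
have U : uniq [:: a; b; c] by rewrite /= !inE !negb_or Hab eq_sym Hca eq_sym Hcb.
have [d [U' E]] := card4_complete3 HA Ha Hb HcA U.
by exists c, d.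
Qed.

Lemma card4_complete1 (A : {set T}) a : #|A| = 4 -> a \in A ->
  exists c d e, uniq [:: a; c; d; e] /\ A = [set a; c; d; e].
Proof.
move=> HA Ha.
have: (0 < #|A :\ a|)%N by move: (cardsD1 a A); rewrite HA Ha; lia.
case/card_gt0P => c; rewrite !inE => /andP[Hca HcA].
have Hac : a != c by rewrite eq_sym.
have [d [e [U E]]] := card4_complete2 HA Ha HcA Hac.
by exists c, d, e.
Qed.

Lemma sub4_card3 (t : {set T}) p q r s : uniq [:: p; q; r; s] ->
  t \subset [set p; q; r; s] -> #|t| = 3 ->
  [\/ t = [set q; r; s], t = [set p; r; s], t = [set p; q; s] | t = [set p; q; r]].
Proof.
move=> U Hsub Ht; set S := [set p; q; r; s].
have : #|S :\: t| == 1%N by rewrite cardsD (setIidPr Hsub) card_set4 // Ht.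
case/cards1P => x Hx.
have Et : t = S :\: [set x] by rewrite -Hx setDDr setDv set0U (setIidPr Hsub).
have : x \in S :\: t by rewrite Hx set11.
rewrite inE => /andP[_]; rewrite !inE; expand_uniq U.
move=> /orP[/orP[/orP[]|]|] /eqP Ex; subst x.
- by constructor 1; rewrite Et; solve_set_eq.
- by constructor 2; rewrite Et; solve_set_eq.
- by constructor 3; rewrite Et; solve_set_eq.
- by constructor 4; rewrite Et; solve_set_eq.
Qed.

Lemma prod_perm_fix (I : eqType) (r : seq I) (P : pred I) (F : I -> {perm T}) c :
  (forall i, i \in r -> P i -> F i c = c) -> (\prod_(i <- r | P i) F i) c = c.
Proof.
elim: r => [|i r IH] H; first by rewrite big_nil perm1.
have H' j : j \in r -> P j -> F j c = c by move=> Hj; apply: H; rewrite inE Hj orbT.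
rewrite big_cons; case: ifP => Pi; last exact: IH.
by rewrite permM H ?mem_head // IH.
Qed.

Lemma prod_perm_single (I : eqType) (r : seq I) (P : pred I) (F : I -> {perm T})
    c d i0 : uniq r -> i0 \in r -> P i0 -> F i0 c = d ->
  (forall i, i \in r -> P i -> i != i0 -> F i c = c /\ F i d = d) ->
  (\prod_(i <- r | P i) F i) c = d.
Proof.
elim: r => [|i r IH] //= /andP[Hi U] Hin P0 F0 H; rewrite big_cons.
case: (i =P i0) => [Ei|Ni].
  subst i0; rewrite P0 permM F0 prod_perm_fix // => j Hj Pj.
  apply: (proj2 (H j _ Pj _)); first by rewrite inE Hj orbT.
  by apply: contraNneq Hi => <-.
have Hin' : i0 \in r by move: Hin; rewrite inE; case: eqP => // E; case: Ni.
have H' j : j \in r -> P j -> j != i0 -> F j c = c /\ F j d = d.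
  by move=> Hj; apply: H; rewrite inE Hj orbT.
case: ifP => Pi; last exact: IH U Hin' P0 F0 H'.
rewrite permM (proj1 (H i (mem_head _ _) Pi (introN eqP Ni))).
exact: IH U Hin' P0 F0 H'.
Qed.

Lemma swap_pair2 (u v : T) : u != v -> Defs.swap_pair [set u; v] = tperm u v.
Proof.
move=> Huv; rewrite /Defs.swap_pair.
case: pickP => [w Hw|H]; last by have := H u; rewrite !inE eqxx.
case: pickP => [w' Hw'|H]; last first.
  move: Hw; rewrite !inE => /orP[]/eqP Ew; subst w.
    by have := H v; rewrite !inE eqxx orbT eq_sym Huv.
  by have := H u; rewrite !inE eqxx Huv.
move: Hw Hw'; rewrite !inE => /orP[]/eqP -> /andP[Hne /orP[]/eqP Ew']; subst w';
  rewrite ?eqxx // in Hne; by rewrite tpermC.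
Qed.

End FiniteSets.

Lemma prime_order_expg (gT : finGroupType) (g : gT) p :
  prime p -> g ^+ p = 1 -> g != 1 -> #[g] = p.
Proof.
move=> Pp Hg Hn; apply/(prime_nt_dvdP Pp); first by rewrite order_eq1.
by rewrite order_dvdn Hg.
Qed.

Section Design.
Variable T : finType.
Variable Bs : {set {set T}}.
Hypothesis Hblock4 : blocks_of_size4 Bs.
Hypothesis Hss : supersimple Bs.
Hypothesis Htri : prop_triangle Bs.

Lemma eq_line (X Y : {set T}) : X =i Y -> X \in Bs -> Y \in Bs.
Proof. by move/setP <-. Qed.

Ltac solve_line_perm H :=
  apply: (eq_line _ H) => ?; rewrite !inE; by do !case: (_ == _).

Lemma line_eq3 (B1 B2 : {set T}) a b c : B1 \in Bs -> B2 \in Bs ->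
  uniq [:: a; b; c] -> a \in B1 -> b \in B1 -> c \in B1 ->
  a \in B2 -> b \in B2 -> c \in B2 -> B1 = B2.
Proof.
move=> H1 H2 U a1 b1 c1 a2 b2 c2; apply/eqP; apply: contraT => Hne.
have : [set a; b; c] \subset B1 :&: B2.
  by apply/subsetP => w; rewrite !inE => /orP[/orP[]|] /eqP ->; apply/andP.
move/subset_leq_card; rewrite card_set3 // => H3.
by have := leq_trans H3 (Hss H1 H2 Hne).
Qed.

Lemma line_triangle (p q r s u v : T) :
  [set p; q; r; s] \in Bs -> [set p; q; u; v] \in Bs ->
  uniq [:: p; q; r; s; u; v] -> [set r; s; u; v] \in Bs.
Proof.
move=> H1 H2 U; have U' := U; expand_uniq U'.
have E : [set p; q; r; s] :&: [set p; q; u; v] = [set p; q] by solve_set_eq.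
have := Htri H1 H2; rewrite E cards2; rewrite_neqs => /(_ erefl) H.
apply: (eq_line _ H) => w; rewrite !inE.
case_eq_point w; rewrite_neqs; rewrite ?orbT ?orbF ?andbT ?andbF //.
Qed.

Lemma overlineP a b w : reflect (exists2 B, B \in Bs & [&& a \in B, b \in B & w \in B])
  (w \in overline Bs a b).
Proof.
rewrite inE; apply: (iffP existsP) => [[B /andP[HB H]]|[B HB H]];
  by exists B => //; rewrite HB.
Qed.

Lemma overline_line (B : {set T}) a b w : B \in Bs ->
  a \in B -> b \in B -> w \in B -> w \in overline Bs a b.
Proof. by move=> HB Ha Hb Hw; apply/overlineP; exists B => //; apply/and3P. Qed.

Ltac solve_overline H := apply: (overline_line H); by rewrite !inE eqxx ?orbT.

Lemma overlineC a b w : (w \in overline Bs a b) = (w \in overline Bs b a).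
Proof.
apply/overlineP/overlineP => [][B HB H]; exists B => //;
  by move: H; rewrite !andbA [(a \in B) && _]andbC.
Qed.

Lemma overline_rot a b w : (w \in overline Bs a b) = (b \in overline Bs a w).
Proof.
by apply/overlineP/overlineP => [][B HB /and3P[H1 H2 H3]]; exists B => //; apply/and3P.
Qed.

Lemma overline_line4 a b w : uniq [:: a; b; w] -> w \in overline Bs a b ->
  exists d, uniq [:: a; b; w; d] /\ [set a; b; w; d] \in Bs.
Proof.
move=> U /overlineP [B HB /and3P[Ha Hb Hw]].
have [d [U' E]] := card4_complete3 (Hblock4 HB) Ha Hb Hw U.
by exists d; rewrite -E.
Qed.

Lemma swap_pair_fix (B : {set T}) a b x : B \in Bs -> a \in B -> b \in B -> a != b ->
  x \notin B :\ a :\ b -> Defs.swap_pair (B :\ a :\ b) x = x.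
Proof.
move=> HB Ha Hb Hab Hx.
have [c [d [U E]]] := card4_complete2 (Hblock4 HB) Ha Hb Hab.
have E2 : B :\ a :\ b = [set c; d] by rewrite E; expand_uniq U; solve_set_eq.
have U' := U; expand_uniq U'.
rewrite E2 swap_pair2 //; apply: tpermD.
  by apply/eqP => Ex; move: Hx; rewrite E2 Ex !inE eqxx.
by apply/eqP => Ex; move: Hx; rewrite E2 Ex !inE eqxx orbT.
Qed.

Lemma bracket_id a : bracket Bs a a = 1.
Proof. by rewrite /bracket eqxx. Qed.

Lemma bracketE a b c : a != b -> bracket Bs a b c =
  (\prod_(B <- index_enum {set T} | (B \in Bs) && ((a \in B) && (b \in B)))
     Defs.swap_pair (B :\ a :\ b)) (tperm a b c).
Proof. by move=> Hab; rewrite /bracket (negbTE Hab) permM big_mkcondr /= -big_mkcondr. Qed.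

Lemma bracketL a b : a != b -> bracket Bs a b a = b.
Proof.
move=> Hab; rewrite bracketE // tpermL prod_perm_fix // => B _ /andP[HB /andP[Ha Hb]].
by apply: swap_pair_fix => //; rewrite !inE eqxx.
Qed.

Lemma bracketR a b : a != b -> bracket Bs a b b = a.
Proof.
move=> Hab; rewrite bracketE // tpermR prod_perm_fix // => B _ /andP[HB /andP[Ha Hb]].
by apply: swap_pair_fix => //; rewrite !inE eqxx andbF.
Qed.

Lemma bracket_fix a b c : a != b -> c != a -> c != b -> c \notin overline Bs a b ->
  bracket Bs a b c = c.
Proof.
move=> Hab Hca Hcb Hc; rewrite bracketE // tpermD 1?eq_sym //.
rewrite prod_perm_fix // => B _ /andP[HB /andP[Ha Hb]].
apply: swap_pair_fix => //; rewrite !inE; apply/negP => /andP[_ /andP[_ HcB]].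
by move: Hc; rewrite (overline_line HB Ha Hb HcB).
Qed.

Lemma bracket_line a b c d : uniq [:: a; b; c; d] -> [set a; b; c; d] \in Bs ->
  bracket Bs a b c = d.
Proof.
move=> U HL; have U' := U; expand_uniq U'.
have [Hca Hcb] : c != a /\ c != b by split; rewrite eq_sym.
rewrite bracketE // tpermD //.
apply: (@prod_perm_single _ _ _ _ _ _ _ [set a; b; c; d]).
- exact: index_enum_uniq.
- exact: mem_index_enum.
- by rewrite HL !inE !eqxx !orbT.
- have -> : [set a; b; c; d] :\ a :\ b = [set c; d] by solve_set_eq.
  by rewrite swap_pair2 // tpermL.
move=> B _ /andP[HB /andP[Ha Hb]] HBL.
have Hnot (w : T) : uniq [:: a; b; w] -> w \in [set a; b; c; d] -> w \notin B.
  move=> Uw Hw; apply/negP => HwB; move/eqP: HBL; apply.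
  by apply: (line_eq3 (a := a) (b := b) (c := w)) => //; rewrite !inE eqxx ?orbT.
have Hc : c \notin B by apply: Hnot; [solve_uniq | rewrite !inE eqxx ?orbT].
have Hd : d \notin B by apply: Hnot; [solve_uniq | rewrite !inE eqxx ?orbT].
by split; apply: swap_pair_fix; rewrite // !inE ?(negbTE Hc) ?(negbTE Hd) !andbF.
Qed.

Lemma bracketC a b : bracket Bs a b = bracket Bs b a.
Proof.
rewrite /bracket eq_sym; case: eqP => // _; rewrite tpermC; congr (_ * _).
apply: eq_big => [B|B _]; first by rewrite [(a \in B) && _]andbC.
by congr Defs.swap_pair; apply/setP => w; rewrite !inE andbCA.
Qed.

Lemma bracket_cases a b w : a != b -> w != a -> w != b ->
  (exists d, [/\ uniq [:: a; b; w; d], [set a; b; w; d] \in Bs & bracket Bs a b w = d])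
  \/ (w \notin overline Bs a b /\ bracket Bs a b w = w).
Proof.
move=> Hab Hwa Hwb.
case: (boolP (w \in overline Bs a b)) => Hw; last by right; rewrite bracket_fix.
have U : uniq [:: a; b; w] by solve_uniq.
have [d [U' HL]] := overline_line4 U Hw.
by left; exists d; rewrite (bracket_line U' HL).
Qed.

Lemma bracketK a b : bracket Bs a b * bracket Bs a b = 1.
Proof.
have [->|Hab] := eqVneq a b; first by rewrite bracket_id mulg1.
apply/permP => w; rewrite permM perm1.
have [->|Hwa] := eqVneq w a; first by rewrite bracketL // bracketR.
have [->|Hwb] := eqVneq w b; first by rewrite bracketR // bracketL.
case: (bracket_cases Hab Hwa Hwb) => [[d [U HL ->]]|[_ E]]; last by rewrite !E.
have U' := U; expand_uniq U'.
by apply: bracket_line; [solve_uniq | solve_line_perm HL].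
Qed.

Lemma bracketV a b : (bracket Bs a b)^-1 = bracket Bs a b.
Proof. by apply/eqP; rewrite eq_invg_mul bracketK. Qed.

Lemma bracket_line_transfer a b c d w e :
  uniq [:: a; b; c; d; w] -> uniq [:: a; b; w; e] ->
  [set a; b; c; d] \in Bs -> [set a; b; w; e] \in Bs -> bracket Bs c d w = e.
Proof.
move=> U Ue HL HLe; have U' := U; expand_uniq U'; have Ue' := Ue; expand_uniq Ue'.
have Hoff (v : T) : uniq [:: a; b; v] -> v \in [set a; b; c; d] -> e != v.
  move=> Uv Hv; apply/eqP => Eev; subst e.
  have Eq : [set a; b; c; d] = [set a; b; w; v].
    by apply: (line_eq3 (a := a) (b := b) (c := v)) => //; rewrite !inE eqxx ?orbT.
  have : w \in [set a; b; c; d] by rewrite Eq !inE eqxx !orbT.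
  by rewrite !inE; rewrite_neqs.
have Hec : e != c by apply: Hoff; [solve_uniq | rewrite !inE eqxx ?orbT].
have Hed : e != d by apply: Hoff; [solve_uniq | rewrite !inE eqxx ?orbT].
apply: bracket_line; first by solve_uniq.
by apply: (line_triangle HL HLe); solve_uniq.
Qed.

Lemma bracket_line_eq a b c d : uniq [:: a; b; c; d] -> [set a; b; c; d] \in Bs ->
  bracket Bs a b = bracket Bs c d.
Proof.
move=> U HL; have U' := U; expand_uniq U'.
have HL' : [set c; d; a; b] \in Bs by solve_line_perm HL.
apply/permP => w.
have [->|Hwa] := eqVneq w a.
  by rewrite bracketL // (@bracket_line c d a b) //; solve_uniq.
have [->|Hwb] := eqVneq w b.
  rewrite bracketR // (@bracket_line c d b a) //; [solve_uniq | solve_line_perm HL].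
have [->|Hwc] := eqVneq w c; first by rewrite (bracket_line U HL) bracketL.
have [->|Hwd] := eqVneq w d.
  rewrite bracketR // (@bracket_line a b d c) //; [solve_uniq | solve_line_perm HL].
have U5 : uniq [:: a; b; c; d; w] by solve_uniq.
have U5' : uniq [:: c; d; a; b; w] by solve_uniq.
case: (bracket_cases _ Hwa Hwb) => // [[e [Ue HLe ->]]|[Hn ->]].
  by rewrite (bracket_line_transfer U5 Ue HL HLe).
case: (bracket_cases _ Hwc Hwd) => // [[e [Ue HLe _]]|[_ ->]] //.
move/(bracket_line_transfer U5' Ue HL'): HLe; rewrite bracket_fix // => Ewe.
by move: Ue; rewrite Ewe /= !inE eqxx /= !andbF.
Qed.

Lemma aut1 : automorphism Bs 1.
Proof. by move=> B; rewrite (eq_imset (g := id)) ?imset_id // => x; rewrite perm1. Qed.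

Lemma autM g h : automorphism Bs g -> automorphism Bs h -> automorphism Bs (g * h).
Proof.
move=> Hg Hh B; have -> : (g * h) @: B = h @: (g @: B).
  by rewrite -imset_comp; apply: eq_imset => x; rewrite permM.
by rewrite -Hh -Hg.
Qed.

Lemma aut_line4 g p q r s : automorphism Bs g ->
  ([set p; q; r; s] \in Bs) = ([set g p; g q; g r; g s] \in Bs).
Proof. by move=> Hg; rewrite (Hg [set p; q; r; s]) !imsetU !imset_set1. Qed.

Lemma aut_bracket g a b w : automorphism Bs g ->
  bracket Bs (g a) (g b) (g w) = g (bracket Bs a b w).
Proof.
move=> Hg; have ginj := inj_eq (@perm_inj _ g).
have [->|Hab] := eqVneq a b; first by rewrite !bracket_id !perm1.
have [->|Hwa] := eqVneq w a; first by rewrite !bracketL // ginj.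
have [->|Hwb] := eqVneq w b; first by rewrite !bracketR // ginj.
case: (bracket_cases Hab Hwa Hwb) => [[d [U HL ->]]|[Hn ->]].
  apply: bracket_line; last by rewrite -aut_line4.
  by have : uniq (map g [:: a; b; w; d]) by rewrite (map_inj_uniq (@perm_inj _ g)).
apply: bracket_fix; rewrite ?ginj //; apply/negP => Hin.
have U : uniq [:: g a; g b; g w] by rewrite /= !inE !negb_or !ginj; rewrite_neqs.
have [e [_ HLe]] := overline_line4 U Hin.
move: HLe; rewrite -(permKV g e) -aut_line4 // => HLe.
by move: Hn; rewrite (overline_line HLe) // !inE eqxx ?orbT.
Qed.

Lemma bracketJ g a b : automorphism Bs g -> bracket Bs a b ^ g = bracket Bs (g a) (g b).
Proof.
move=> Hg; apply/permP => w; rewrite conjgE !permM.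
by rewrite -{2}(permKV g w) aut_bracket.
Qed.

Lemma collinear3E p q r : uniq [:: p; q; r] ->
  ([set p; q; r] \in collinear_triples Bs) = (r \in overline Bs p q).
Proof.
move=> U; rewrite inE card_set3 // eqxx /=.
apply/existsP/overlineP => [[B /andP[HB Hs]]|[B HB /and3P[Hp Hq Hr]]]; exists B => //.
  by rewrite !(subsetP Hs) // !inE eqxx ?orbT.
by rewrite HB /=; apply/subsetP => w; rewrite !inE => /orP[/orP[]|] /eqP ->.
Qed.

Lemma collinear_in4E p q r s t : uniq [:: p; q; r; s] ->
  (t \in [set t in collinear_triples Bs | t \subset [set p; q; r; s]]) =
  [|| (t == [set q; r; s]) && (s \in overline Bs q r),
      (t == [set p; r; s]) && (s \in overline Bs p r),
      (t == [set p; q; s]) && (s \in overline Bs p q) |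
      (t == [set p; q; r]) && (r \in overline Bs p q)].
Proof.
move=> U; have U' := U; expand_uniq U'.
rewrite inE; apply/andP/idP => [[Hc Hs]|].
  have Ht : #|t| = 3 by move: Hc; rewrite inE => /andP[/eqP].
  case: (sub4_card3 U Hs Ht) => Et; subst t; rewrite collinear3E in Hc; try solve_uniq;
    by rewrite eqxx Hc ?orbT.
move=> /or4P[] /andP[/eqP -> H]; split; try (rewrite collinear3E //; solve_uniq);
  by apply/subsetP => w; rewrite !inE; do !case: (_ == _).
Qed.

Hypothesis Heven : forall S : {set T}, #|S| = 4 ->
  #|[set t in collinear_triples Bs | t \subset S]| \in [:: 0; 2; 4]%N.

Lemma collinear_even3 p q r s : uniq [:: p; q; r; s] ->
  r \in overline Bs p q -> s \in overline Bs p q -> s \in overline Bs p r ->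
  s \in overline Bs q r.
Proof.
move=> U H1 H2 H3; apply: contraT => Hn; have U' := U; expand_uniq U'.
have E : [set t in collinear_triples Bs | t \subset [set p; q; r; s]] =
         [set [set p; r; s]; [set p; q; s]; [set p; q; r]].
  apply/setP => t; rewrite collinear_in4E // !in_setU !in_set1 (negbTE Hn) H1 H2 H3.
  by rewrite andbF !andbT /= !orbA.
have neq3 (X Y : {set T}) v : v \in X -> v \notin Y -> X != Y.
  by move=> HX HY; apply: contraNneq HY => <-.
have := Heven (card_set4 U); rewrite E card_set3 //= !inE !negb_or.
apply/and3P; split; [apply/andP; split| |] => //;
  [apply: (neq3 _ _ r) | apply: (neq3 _ _ s) | apply: (neq3 _ _ s)];
  rewrite !inE; rewrite_neqs; by rewrite ?orbT.
Qed.

Lemma collinear_even1 p q r s : uniq [:: p; q; r; s] ->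
  r \in overline Bs p q -> s \notin overline Bs p q -> s \notin overline Bs p r ->
  s \in overline Bs q r.
Proof.
move=> U H1 H2 H3; apply: contraT => Hn.
have E : [set t in collinear_triples Bs | t \subset [set p; q; r; s]] = [set [set p; q; r]].
  apply/setP => t; rewrite collinear_in4E // in_set1 (negbTE Hn) H1.
  by rewrite (negbTE H2) (negbTE H3) !andbF !andbT.
by have := Heven (card_set4 U); rewrite E cards1.
Qed.

Lemma bracket_off_line a b c (B : {set T}) : a != b -> B \in Bs ->
  a \in B -> b \notin B -> c \in B -> c != a -> c \in overline Bs a b ->
  exists c', [/\ uniq [:: a; b; c; c'], [set a; b; c; c'] \in Bs, c' \notin B &
                 bracket Bs a b c = c'].
Proof.
move=> Hab HB Ha Hb Hc Hca Hov.
have Hcb : c != b by apply: contraNneq Hb => <-.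
have U : uniq [:: a; b; c] by solve_uniq.
have [c' [U' HL]] := overline_line4 U Hov.
exists c'; split => //; last exact: bracket_line.
apply/negP => Hc'; have U'' := U'; expand_uniq U''.
have E : B = [set a; b; c; c'].
  by apply: (line_eq3 (a := a) (b := c) (c := c')) => //; solve_uniq || rewrite !inE eqxx ?orbT.
by move: Hb; rewrite E !inE eqxx orbT.
Qed.

Section LineThroughFirstPoint.
Variables a b c d e : T.
Hypothesis U : uniq [:: a; b; c; d; e].
Hypothesis HB : [set a; c; d; e] \in Bs.

Let partner_of v : v \in overline Bs a b -> v \in [:: c; d; e] ->
  exists v', [/\ uniq [:: a; b; v; v'], [set a; b; v; v'] \in Bs,
                 v' \notin [set a; c; d; e] & bracket Bs a b v = v'].
Proof.
move=> Hv Hcde; have U' := U; expand_uniq U'.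
apply: bracket_off_line Hv => //; try by rewrite !inE eqxx.
- by rewrite !inE; rewrite_neqs.
- by move: Hcde; rewrite !inE => /or3P[] /eqP ->; rewrite ?eqxx ?orbT.
- by move: Hcde; rewrite !inE => /or3P[] /eqP ->; rewrite_neqs.
Qed.

Lemma line_image_none :
  c \notin overline Bs a b -> d \notin overline Bs a b -> e \notin overline Bs a b ->
  [set b; c; d; e] \in Bs.
Proof.
move=> Hc Hd He; have U' := U; expand_uniq U'.
have Hbcd : b \in overline Bs c d.
  by apply: (@collinear_even1 a); [solve_uniq | solve_overline HB | rewrite overline_rot ..].
have U3 : uniq [:: c; d; b] by solve_uniq.
have [e' [Ue HL]] := overline_line4 U3 Hbcd; have Ue' := Ue; expand_uniq Ue'.
have [Ee|Hne] := eqVneq e' e; first by subst e'; solve_line_perm HL.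
have Hea' : e' != a by apply: contraNneq Hc => Ee; subst e'; solve_overline HL.
have HB' : [set c; d; a; e] \in Bs by solve_line_perm HB.
have := line_triangle HB' HL; rewrite /= !inE !negb_or; rewrite_neqs => /(_ isT) H.
by move: He; rewrite (_ : e \in overline Bs a b) //; solve_overline H.
Qed.

Lemma line_image_one :
  c \in overline Bs a b -> d \notin overline Bs a b -> e \notin overline Bs a b ->
  [set b; bracket Bs a b c; d; e] \in Bs.
Proof.
move=> Hc Hd He; have U' := U; expand_uniq U'.
have /(partner_of Hc) [c' [Uc HLc Hc'B ->]] : c \in [:: c; d; e] by rewrite inE eqxx.
have Uc' := Uc; expand_uniq Uc'; move: Hc'B; rewrite !inE !negb_or => Hc'B; split_ands.
have HL' : [set a; c; b; c'] \in Bs by solve_line_perm HLc.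
have := line_triangle HB HL'; rewrite /= !inE !negb_or; rewrite_neqs => /(_ isT) H.
solve_line_perm H.
Qed.
Lemma line_image_not_two :
  c \in overline Bs a b -> d \in overline Bs a b -> e \notin overline Bs a b -> False.
Proof.
move=> Hc Hd He; have U' := U; expand_uniq U'.
have /(partner_of Hc) [c' [Uc HLc Hc'B Ec]] : c \in [:: c; d; e] by rewrite inE eqxx.
have /(partner_of Hd) [d' [Ud HLd Hd'B Ed]] : d \in [:: c; d; e] by rewrite !inE eqxx orbT.
have Hcd' : c' != d'.
  by rewrite -Ec -Ed (inj_eq (@perm_inj _ _)); rewrite_neqs.
have Uc' := Uc; expand_uniq Uc'; move: Hc'B; rewrite !inE !negb_or => Hc'B; split_ands.
have Ud' := Ud; expand_uniq Ud'; move: Hd'B; rewrite !inE !negb_or => Hd'B; split_ands.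
have H1 : [set d; e; b; c'] \in Bs.
  have HL' : [set a; c; b; c'] \in Bs by solve_line_perm HLc.
  by have := line_triangle HB HL'; rewrite /= !inE !negb_or; rewrite_neqs => /(_ isT).
have H2 : [set c; e; b; d'] \in Bs.
  have HB' : [set a; d; c; e] \in Bs by solve_line_perm HB.
  have HL' : [set a; d; b; d'] \in Bs by solve_line_perm HLd.
  by have := line_triangle HB' HL'; rewrite /= !inE !negb_or; rewrite_neqs => /(_ isT).
have H3 : [set e; d'; a; c'] \in Bs.
  have H2' : [set b; c; e; d'] \in Bs by solve_line_perm H2.
  have HL' : [set b; c; a; c'] \in Bs by solve_line_perm HLc.
  by have := line_triangle H2' HL'; rewrite /= !inE !negb_or; rewrite_neqs => /(_ isT).
move/negP: He; apply; apply: (@collinear_even3 c'); first by solve_uniq.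
- by solve_overline HLc.
- by solve_overline H3.
- by solve_overline H1.
Qed.

Lemma line_image_all :
  c \in overline Bs a b -> d \in overline Bs a b -> e \in overline Bs a b ->
  [set b; bracket Bs a b c; bracket Bs a b d; bracket Bs a b e] \in Bs.
Proof.
move=> Hc Hd He; have U' := U; expand_uniq U'.
have /(partner_of Hc) [c' [Uc HLc Hc'B Ec]] : c \in [:: c; d; e] by rewrite inE eqxx.
have /(partner_of Hd) [d' [Ud HLd Hd'B Ed]] : d \in [:: c; d; e] by rewrite !inE eqxx orbT.
have /(partner_of He) [e' [Ue HLe He'B Ee]] : e \in [:: c; d; e] by rewrite !inE eqxx !orbT.
have Hcd' : c' != d' by rewrite -Ec -Ed (inj_eq (@perm_inj _ _)); rewrite_neqs.
have Hce' : c' != e' by rewrite -Ec -Ee (inj_eq (@perm_inj _ _)); rewrite_neqs.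
have Hde' : d' != e' by rewrite -Ed -Ee (inj_eq (@perm_inj _ _)); rewrite_neqs.
rewrite Ec Ed Ee.
have Uc' := Uc; expand_uniq Uc'; move: Hc'B; rewrite !inE !negb_or => Hc'B; split_ands.
have Ud' := Ud; expand_uniq Ud'; move: Hd'B; rewrite !inE !negb_or => Hd'B; split_ands.
have Ue' := Ue; expand_uniq Ue'; move: He'B; rewrite !inE !negb_or => He'B; split_ands.
have H1 : [set d; e; b; c'] \in Bs.
  have HL' : [set a; c; b; c'] \in Bs by solve_line_perm HLc.
  by have := line_triangle HB HL'; rewrite /= !inE !negb_or; rewrite_neqs => /(_ isT).
have H2 : [set e; c'; a; d'] \in Bs.
  have H1' : [set d; b; e; c'] \in Bs by solve_line_perm H1.
  have HL' : [set d; b; a; d'] \in Bs by solve_line_perm HLd.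
  by have := line_triangle H1' HL'; rewrite /= !inE !negb_or; rewrite_neqs => /(_ isT).
have H2' : [set a; e; c'; d'] \in Bs by solve_line_perm H2.
have HL' : [set a; e; b; e'] \in Bs by solve_line_perm HLe.
have := line_triangle H2' HL'; rewrite /= !inE !negb_or; rewrite_neqs => /(_ isT) H3.
solve_line_perm H3.
Qed.
End LineThroughFirstPoint.

Lemma bracket_image_line_through_first a b (B : {set T}) : a != b -> B \in Bs ->
  a \in B -> b \notin B -> bracket Bs a b @: B \in Bs.
Proof.
move=> Hab HB Ha Hb.
have [c [d [e [U E]]]] := card4_complete1 (Hblock4 HB) Ha; subst B.
rewrite !imsetU !imset_set1 bracketL //.
have U5 : uniq [:: a; b; c; d; e].
  have U' := U; expand_uniq U'; move: Hb; rewrite !inE !negb_or => Hb; split_ands.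
  solve_uniq.
have U' := U5; expand_uniq U'.
have fixed v : v \notin overline Bs a b -> v \in [:: c; d; e] -> bracket Bs a b v = v.
  by move=> Hv; rewrite !inE => /or3P[] /eqP Ev; subst v; apply: bracket_fix; rewrite_neqs.
have [Hcin Hdin Hein] : [/\ c \in [:: c; d; e], d \in [:: c; d; e] & e \in [:: c; d; e]].
  by rewrite !inE !eqxx ?orbT.
case: (boolP (c \in overline Bs a b)) => Hc; case: (boolP (d \in overline Bs a b)) => Hd;
  case: (boolP (e \in overline Bs a b)) => He;
  rewrite ?(fixed c Hc Hcin) ?(fixed d Hd Hdin) ?(fixed e He Hein).
- exact: line_image_all U5 HB Hc Hd He.
- by case: (line_image_not_two U5 HB Hc Hd He).
- by case: (@line_image_not_two a b c e d); rewrite //=; [solve_uniq | solve_line_perm HB].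
- exact: line_image_one U5 HB Hc Hd He.
- by case: (@line_image_not_two a b d e c); rewrite //=; [solve_uniq | solve_line_perm HB].
- have H : [set b; bracket Bs a b d; c; e] \in Bs.
    by apply: (@line_image_one a b d c e) => //; [solve_uniq | solve_line_perm HB].
  solve_line_perm H.
- have H : [set b; bracket Bs a b e; c; d] \in Bs.
    by apply: (@line_image_one a b e c d) => //; [solve_uniq | solve_line_perm HB].
  solve_line_perm H.
- exact: line_image_none U5 HB Hc Hd He.
Qed.

Lemma bracket_image_line_through a b (B : {set T}) : a != b -> B \in Bs -> a \in B ->
  bracket Bs a b @: B \in Bs.
Proof.
move=> Hab HB Ha; case: (boolP (b \in B)) => Hb.
  have [c [d [U E]]] := card4_complete2 (Hblock4 HB) Ha Hb Hab; subst B.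
  have U' := U; expand_uniq U'.
  rewrite !imsetU !imset_set1 bracketL // bracketR // (bracket_line U HB).
  rewrite (@bracket_line a b d c); [solve_line_perm HB | solve_uniq | solve_line_perm HB].
exact: bracket_image_line_through_first.
Qed.

Lemma bracket_image_line a b (B : {set T}) : B \in Bs -> bracket Bs a b @: B \in Bs.
Proof.
move=> HB; have [->|Hab] := eqVneq a b; first by rewrite bracket_id -aut1.
case: (boolP (a \in B)) => Ha; first exact: bracket_image_line_through.
case: (boolP (b \in B)) => Hb.
  by rewrite bracketC; apply: bracket_image_line_through; rewrite // eq_sym.
have off p : p \in B -> p != a /\ p != b.
  by move=> Hp; split; [apply: contraNneq Ha | apply: contraNneq Hb] => <-.
case: (boolP [exists p in B, p \in overline Bs a b]) => [/existsP[p /andP[Hp Hov]]|Hex].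
  have [Hpa Hpb] := off p Hp.
  have U : uniq [:: a; b; p] by solve_uniq.
  have [d [U' HL]] := overline_line4 U Hov; have Ud := U'; expand_uniq Ud.
  by rewrite (bracket_line_eq U' HL); apply: bracket_image_line_through.
suff -> : bracket Bs a b @: B = B by [].
rewrite -[RHS]imset_id; apply: eq_in_imset => p Hp; have [Hpa Hpb] := off p Hp.
apply: bracket_fix => //; apply: contraNN Hex => Hov.
by apply/existsP; exists p; rewrite Hp.
Qed.

Lemma bracket_aut a b : automorphism Bs (bracket Bs a b).
Proof.
move=> B; apply/idP/idP; first exact: bracket_image_line.
move/(bracket_image_line a b); rewrite -imset_comp (eq_imset (g := id)) ?imset_id //.
by move=> x /=; rewrite -permM bracketK perm1.
Qed.

Lemma conjg_bracketE a b c d : bracket Bs c d ^ bracket Bs a b =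
  bracket Bs a b * (bracket Bs c d * bracket Bs a b).
Proof. by rewrite conjgE bracketV. Qed.

Lemma bracket_mul_neq1 x y z : x != y -> y != z -> x != z ->
  bracket Bs x y * bracket Bs y z != 1.
Proof.
move=> Hxy Hyz Hxz; apply: contra_neq Hxz => /(congr1 (fun g : {perm T} => g x)).
by rewrite permM perm1 !bracketL // => ->.
Qed.

Lemma order_bracket_mul_on x y z : x != y -> y != z -> x != z ->
  x \in overline Bs y z -> #[bracket Bs x y * bracket Bs y z] = 2%N.
Proof.
move=> Hxy Hyz Hxz Hov.
have U : uniq [:: y; z; x] by solve_uniq.
have [w [U' HL]] := overline_line4 U Hov; have Uw := U'; expand_uniq Uw.
have Hzw : bracket Bs x y z = w by apply: bracket_line; [solve_uniq | solve_line_perm HL].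
have Hrel : bracket Bs x y * bracket Bs y z * bracket Bs x y = bracket Bs y z.
  rewrite -mulgA -conjg_bracketE (bracketJ _ _ (bracket_aut _ _)) bracketR // Hzw.
  by rewrite (bracket_line_eq U' HL).
apply: prime_order_expg => //; last exact: bracket_mul_neq1.
by rewrite expgS expg1 !mulgA Hrel bracketK.
Qed.

Lemma bracket_braid x y z : x != y -> y != z -> x != z -> x \notin overline Bs y z ->
  bracket Bs x y * bracket Bs y z * bracket Bs x y = bracket Bs x z /\
  bracket Bs y z * bracket Bs x y * bracket Bs y z = bracket Bs x z.
Proof.
move=> Hxy Hyz Hxz Hov.
have Hzo : z \notin overline Bs x y.
  by rewrite overline_rot overlineC overline_rot overlineC.
have Hz : bracket Bs x y z = z by apply: bracket_fix; rewrite // eq_sym.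
have Hx : bracket Bs y z x = x by apply: bracket_fix; rewrite // eq_sym.
rewrite -!mulgA -!conjg_bracketE !(bracketJ _ _ (bracket_aut _ _)).
by rewrite bracketR // bracketL // Hz Hx.
Qed.

Lemma order_bracket_mul_off x y z : x != y -> y != z -> x != z ->
  x \notin overline Bs y z -> #[bracket Bs x y * bracket Bs y z] = 3%N.
Proof.
move=> Hxy Hyz Hxz Hov; have [E1 E2] := bracket_braid Hxy Hyz Hxz Hov.
apply: prime_order_expg => //; last exact: bracket_mul_neq1.
have -> : (bracket Bs x y * bracket Bs y z) ^+ 3 =
    (bracket Bs x y * bracket Bs y z * bracket Bs x y) *
    (bracket Bs y z * bracket Bs x y * bracket Bs y z).
  by rewrite !expgS expg0 mulg1 !mulgA.
by rewrite E1 E2 bracketK.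
Qed.

Lemma move_seq_braid x y z : x != y -> y != z -> x != z -> x \notin overline Bs y z ->
  move_seq Bs z [:: x; y; z] = bracket Bs x y.
Proof.
move=> Hxy Hyz Hxz Hov; have [E1 _] := bracket_braid Hxy Hyz Hxz Hov.
rewrite /= mulg1 (bracketC z x) -E1 !mulgA.
by rewrite -(mulgA (bracket Bs x y * bracket Bs y z)) bracketK mulg1 -mulgA bracketK mulg1.
Qed.

Lemma move_seq_cat a s t :
  move_seq Bs a (s ++ t) = move_seq Bs a s * move_seq Bs (last a s) t.
Proof. by elim: s a => [|b s IH] a /=; rewrite ?mul1g // IH mulgA. Qed.

Lemma move_seq_aut a s : automorphism Bs (move_seq Bs a s).
Proof.
elim: s a => [|b s IH] a /=; first exact: aut1.
exact: autM (bracket_aut a b) (IH b).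
Qed.

Lemma L_inf_mulr_bracket inf g c d : L_inf Bs inf g -> L_inf Bs inf (g * bracket Bs c d).
Proof.
case=> s ->; set e := last inf s.
have [->|Hcd] := eqVneq c d; first by exists s; rewrite bracket_id mulg1.
have [Ec|Hec] := eqVneq e c.
  by exists (s ++ [:: d]); rewrite move_seq_cat -/e Ec /= mulg1.
have [Ed|Hed] := eqVneq e d.
  by exists (s ++ [:: c]); rewrite move_seq_cat -/e Ed /= mulg1 bracketC.
case: (boolP (e \in overline Bs c d)) => Hov.
  have U : uniq [:: c; d; e] by solve_uniq.
  have [w [U' HL]] := overline_line4 U Hov.
  by exists (s ++ [:: w]); rewrite move_seq_cat -/e /= mulg1 (bracket_line_eq U' HL).
have Hco : c \notin overline Bs d e by rewrite overline_rot overlineC.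
by exists (s ++ [:: c; d; e]); rewrite move_seq_cat -/e move_seq_braid // eq_sym.
Qed.

Lemma L_inf_mulr_move_seq inf h a s :
  L_inf Bs inf h -> L_inf Bs inf (h * move_seq Bs a s).
Proof.
elim: s a h => [|b s IH] a h Hh /=; first by rewrite mulg1.
by rewrite mulgA; apply/IH/L_inf_mulr_bracket.
Qed.

Lemma L_inf_mulr_move_seqV inf h a s :
  L_inf Bs inf h -> L_inf Bs inf (h * (move_seq Bs a s)^-1).
Proof.
elim: s a h => [|b s IH] a h Hh /=; first by rewrite invg1 mulg1.
by rewrite invMg bracketV mulgA; apply/L_inf_mulr_bracket/IH.
Qed.

Lemma L_D_L_inf inf g : L_D Bs g <-> L_inf Bs inf g.
Proof.
split=> [[a [s ->]]|[s ->]]; last by exists inf, s.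
by rewrite -[move_seq _ _ _]mul1g; apply: L_inf_mulr_move_seq; exists [::].
Qed.

Lemma L_D_group (inf : T) : is_group_of_automorphisms Bs (L_D Bs).
Proof.
have L_inf1 : L_inf Bs inf 1 by exists [::].
split.
- by exists inf, [::].
- move=> g h /(L_D_L_inf inf) Hg [a [s ->]].
  by apply/(L_D_L_inf inf); apply: L_inf_mulr_move_seq.
- move=> g [a [s ->]]; apply/(L_D_L_inf inf).
  by rewrite -[_^-1]mul1g; apply: L_inf_mulr_move_seqV.
- by move=> g [a [s ->]]; apply: move_seq_aut.
Qed.

End Design.

Theorem lemma4p5 (T : finType) (n lam : nat) (Bs : {set {set T}})
  (Hdes : design_2 Bs n lam) (Hss : supersimple Bs) (Htri : prop_triangle Bs)
  (Htwo : regular_two_graph (collinear_triples Bs))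
  (inf x y z : T) (Hxy : x != y) (Hyz : y != z) (Hxz : x != z) :
  [/\ (x \in overline Bs y z -> #[bracket Bs x y * bracket Bs y z] = 2%N),
      (x \notin overline Bs y z -> #[bracket Bs x y * bracket Bs y z] = 3%N),
      (x \notin overline Bs y z -> move_seq Bs z [:: x; y; z] = bracket Bs x y) &
      ((forall g, L_D Bs g <-> L_inf Bs inf g) /\
       is_group_of_automorphisms Bs (L_D Bs))].
Proof.
case: Hdes => _ Hblock4 _; case: Htwo => _ [_ Heven].
split.
- exact: order_bracket_mul_on.
- exact: order_bracket_mul_off.
- exact: move_seq_braid.
- by split=> [g|]; [apply: L_D_L_inf | apply: L_D_group].
Qed.
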